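(* Let \[ f(x):=(x-r)\prod_{j=2}^n(x-x_j)=x^n+a_1x^{n-1}+a_2x^{n-2}+\cdots+a_n \] be a real polynomial, where $r>0$ and $x_2,\ldots,x_n$ are nonzero complex numbers such that $\mathrm{Re}(x_j)\le0$ for all $j\in\{2,\ldots,n\}$ and $\mathrm{Re}(x_j)<0$ for some $j\in\{2,\ldots,n\}$. Assume that $\prod_{j=2}^n(x-x_j)$ is not of the form $(x+\mu)\prod_{j=1}^m(x^2+\beta_j^2)$ with $\mu,\beta_1,\ldots,\beta_m>0$ (where $n-1=2m+1$). Then for each $k\in\{1,2,\ldots,n-2\}$, $a_k\le0$ implies $a_{k+2}<0$. *)

From mathcomp Require Import all_boot all_order all_algebra.
From mathcomp Require Export complex.
Set Implicit Arguments. Unset Strict Implicit. Unset Printing Implicit Defensive.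
Import Order.TTheory GRing.Theory Num.Theory.
Local Open Scope ring_scope.

Definition excluded_form (R : rcfType) (p : {poly R[i]}) : Prop :=
  exists (mu : R) (m : nat) (beta : 'I_m -> R),
    0 < mu /\ (forall j, 0 < beta j) /\
    p = map_poly (real_complex R)
          (('X + mu%:P) * \prod_(j < m) ('X ^+ 2 + (beta j ^+ 2)%:P)).

From mathcomp Require Import all_boot all_order all_algebra.
From mathcomp Require Import complex.
From mathcomp Require Import zify ring lra.
Set Implicit Arguments. Unset Strict Implicit. Unset Printing Implicit Defensive.
Import Order.TTheory GRing.Theory Num.Theory.
Local Open Scope ring_scope.

(* Write f = (X - r) h, where h = prod_j (X - x_j) is real with coefficients
   c_0, c_1, ...  Grouping conjugate roots, h is a product of real factors
   X + mu and X^2 + p X + q with mu, p, q >= 0.  Multiplying by such a factor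
   preserves nonnegativity of the coefficients and the inequalities
   c_(a-t) c_(b+t) <= c_a c_b  (a <= b, with t even or b - a odd),
   as the constant 1 does; tracking where they are strict shows that, unless h has
   the excluded form, c_(i-1) c_(i+2) < c_i c_(i+1) for all i < deg h.
   With i = n - k - 2 we have a_k = c_(i+1) - r c_(i+2) and
   a_(k+2) = c_(i-1) - r c_i, so a_k <= 0 gives
   c_(i-1) c_(i+2) < c_i c_(i+1) <= r c_i c_(i+2), i.e. a_(k+2) < 0. *)

Section SpreadSequences.
Variable R : realFieldType.
Implicit Types A B : int -> R.

Definition admissible (k t : nat) := ~~ odd t || odd k.

(* The indices are passed
   through defining equations so that instances can be discharged by [lia]. *)
Definition spread_ineq A := forall k t : nat, admissible k t ->
  forall a b c d : int, b = a + k%:Z -> c = a - t%:Z -> d = a + k%:Z + t%:Z ->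
  A c * A d <= A a * A b.

Lemma admissible_oddl k t : odd k -> admissible k t.
Proof. by rewrite /admissible => ->; rewrite orbT. Qed.

Lemma admissibleSSl k t : admissible k.+2 t = admissible k t.
Proof. by rewrite /admissible /= negbK. Qed.

Lemma admissibleSSr k t : admissible k t.+2 = admissible k t.
Proof. by rewrite /admissible /= negbK. Qed.

(* Each cross term on the left is dominated by one on the right, the parities of
   [k] and [t] deciding which pairing is admissible. *)
Lemma spread_cross1 A k t (a b c d : int) : spread_ineq A -> admissible k t ->
  b = a + k%:Z -> c = a - t%:Z -> d = a + k%:Z + t%:Z ->
  A c * A (d - 1) + A (c - 1) * A d <= A a * A (b - 1) + A (a - 1) * A b.
Proof.
move=> spreadA ok eb ec ed.
case: t ok ec ed => [|t] ok ec ed.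
  by have [-> ->] : c = a /\ d = b by split; lia.
have [t_odd|t_even] := boolP (odd t.+1).
  have k_odd : odd k by move: ok; rewrite /admissible t_odd.
  case: k k_odd {ok} eb ed => // k k_odd eb ed.
  have H1 := spreadA k t.+2 ltac:(by rewrite /admissible /= negbK -/(odd t.+1) t_odd)
    a (b - 1) (c - 1) d ltac:(lia) ltac:(lia) ltac:(lia).
  have H2 := spreadA k.+2 t ltac:(by move: t_odd; rewrite /admissible /= => ->)
    (a - 1) b c (d - 1) ltac:(lia) ltac:(lia) ltac:(lia).
  lra.
case: k ok eb ed => [|k] ok eb ed.
  have H1 := spreadA 1%N t.+1 (@admissible_oddl 1%N _ isT)
    (a - 1) a (c - 1) d ltac:(lia) ltac:(lia) ltac:(lia).
  have H2 := spreadA 1%N t (@admissible_oddl 1%N _ isT)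
    (a - 1) a c (d - 1) ltac:(lia) ltac:(lia) ltac:(lia).
  have -> : b = a by lia.
  lra.
have H1 := spreadA k t.+1 ltac:(by rewrite /admissible t_even)
  a (b - 1) c (d - 1) ltac:(lia) ltac:(lia) ltac:(lia).
have H2 := spreadA k.+2 t.+1 ltac:(by rewrite /admissible t_even)
  (a - 1) b (c - 1) d ltac:(lia) ltac:(lia) ltac:(lia).
lra.
Qed.

Lemma spread_cross2 A k t (a b c d : int) : spread_ineq A -> admissible k t ->
  b = a + k%:Z -> c = a - t%:Z -> d = a + k%:Z + t%:Z ->
  A c * A (d - 2) + A (c - 2) * A d <= A a * A (b - 2) + A (a - 2) * A b.
Proof.
move=> spreadA ok eb ec ed.
case: t ok ec ed => [|t] ok ec ed.
  by have [-> ->] : c = a /\ d = b by split; lia.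
case: k ok eb ed => [|[|k]] ok eb ed.
- case: t ok ec ed => [//|t] ok ec ed.
  have H1 := spreadA 2%N t.+2 ok
    (a - 2) a (c - 2) d ltac:(lia) ltac:(lia) ltac:(lia).
  have H2 := spreadA 2%N t ltac:(by rewrite -admissibleSSr)
    (a - 2) a c (d - 2) ltac:(lia) ltac:(lia) ltac:(lia).
  have -> : b = a by lia.
  lra.
- have H1 := spreadA 1%N t (@admissible_oddl 1%N _ isT)
    (b - 2) a c (d - 2) ltac:(lia) ltac:(lia) ltac:(lia).
  have H2 := spreadA 3%N t.+1 (@admissible_oddl 3%N _ isT)
    (a - 2) b (c - 2) d ltac:(lia) ltac:(lia) ltac:(lia).
  lra.
have H1 := spreadA k t.+1 ltac:(by rewrite -admissibleSSl)
  a (b - 2) c (d - 2) ltac:(lia) ltac:(lia) ltac:(lia).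
have H2 := spreadA k.+4 t.+1 ltac:(by rewrite admissibleSSl)
  (a - 2) b (c - 2) d ltac:(lia) ltac:(lia) ltac:(lia).
lra.
Qed.

Definition conv3 (w0 w1 w2 : R) A : int -> R :=
  fun x => w0 * A x + w1 * A (x - 1) + w2 * A (x - 2).

Definition gap A (a b c d : int) := A a * A b - A c * A d.

Lemma spread_gap_ge0 A k t (s a b c d : int) : spread_ineq A -> admissible k t ->
  b = a + k%:Z -> c = a - t%:Z -> d = a + k%:Z + t%:Z ->
  0 <= gap A (a - s) (b - s) (c - s) (d - s).
Proof.
move=> spreadA ok eb ec ed; rewrite subr_ge0.
by apply: spreadA ok _ _ _ _ _ _ _; lia.
Qed.

(* Expanding the products, the diagonal terms give the weighted gaps and the
   off-diagonal ones pair up into the cross terms. *)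
Lemma conv3_gap_ge A (w0 w1 w2 : R) k t (a b c d : int) :
  spread_ineq A -> admissible k t -> 0 <= w0 -> 0 <= w1 -> 0 <= w2 ->
  b = a + k%:Z -> c = a - t%:Z -> d = a + k%:Z + t%:Z ->
  w0 ^+ 2 * gap A a b c d + w1 ^+ 2 * gap A (a - 1) (b - 1) (c - 1) (d - 1)
  + w2 ^+ 2 * gap A (a - 2) (b - 2) (c - 2) (d - 2)
  <= gap (conv3 w0 w1 w2 A) a b c d.
Proof.
move=> spreadA ok w0_ge0 w1_ge0 w2_ge0 eb ec ed.
have X01 := spread_cross1 spreadA ok eb ec ed.
have X02 := spread_cross2 spreadA ok eb ec ed.
have X12 := spread_cross1 spreadA ok (a := a - 1) (b := b - 1) (c := c - 1) (d := d - 1)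
  ltac:(lia) ltac:(lia) ltac:(lia).
have sub11 (x : int) : x - 1 - 1 = x - 2 by lia.
rewrite !sub11 in X12.
rewrite -subr_ge0 in X01; rewrite -subr_ge0 in X12; rewrite -subr_ge0 in X02.
have := mulr_ge0 (mulr_ge0 w0_ge0 w1_ge0) X01.
have := mulr_ge0 (mulr_ge0 w1_ge0 w2_ge0) X12.
have := mulr_ge0 (mulr_ge0 w0_ge0 w2_ge0) X02.
rewrite /gap /conv3; lra.
Qed.

Lemma spread_ineq_conv3 A (w0 w1 w2 : R) : spread_ineq A ->
  0 <= w0 -> 0 <= w1 -> 0 <= w2 -> spread_ineq (conv3 w0 w1 w2 A).
Proof.
move=> spreadA w0_ge0 w1_ge0 w2_ge0 k t ok a b c d eb ec ed; rewrite -subr_ge0.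
apply: le_trans (conv3_gap_ge spreadA ok w0_ge0 w1_ge0 w2_ge0 eb ec ed).
have gap_term (s : int) (w : R) :=
  mulr_ge0 (sqr_ge0 w) (spread_gap_ge0 s spreadA ok eb ec ed).
have := gap_term 0 w0; have := gap_term 1 w1; have := gap_term 2 w2.
rewrite !subr0; lra.
Qed.

Definition strict_spread A (m : nat) := forall i : nat, (i < m)%N ->
  forall a b c d : int, a = i -> b = a + 1 -> c = a - 1 -> d = a + 2 ->
  A c * A d < A a * A b.

Lemma eq_spread_ineq A B : A =1 B -> spread_ineq A -> spread_ineq B.
Proof.
move=> eqAB spreadA k t ok a b c d eb ec ed; rewrite -!eqAB.
exact: spreadA ok _ _ _ _ eb ec ed.
Qed.

Lemma eq_strict_spread A B m : A =1 B -> strict_spread A m -> strict_spread B m.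
Proof.
move=> eqAB strictA i lti a b c d ea eb ec ed; rewrite -!eqAB.
exact: strictA lti _ _ _ _ ea eb ec ed.
Qed.

(* Strictness at [i] is inherited from [A] at [i], [i - 1] or [i - 2] through a
   positive weight. *)
Lemma strict_spread_conv3 A (w0 w1 w2 : R) m m' :
  spread_ineq A -> strict_spread A m -> 0 <= w0 -> 0 <= w1 -> 0 <= w2 ->
  (forall i : nat, (i < m')%N -> [|| (i < m)%N && (0 < w0),
     (0 < i <= m)%N && (0 < w1) | (1 < i <= m.+1)%N && (0 < w2)]) ->
  strict_spread (conv3 w0 w1 w2 A) m'.
Proof.
move=> spreadA strictA w0_ge0 w1_ge0 w2_ge0 inherit i lti a b c d ea eb ec ed.
rewrite -subr_gt0.
have ok := @admissible_oddl 1%N 1%N isT.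
have ed' : d = a + 1%:Z + 1%:Z by lia.
apply: lt_le_trans (conv3_gap_ge spreadA ok w0_ge0 w1_ge0 w2_ge0 eb ec ed').
have gap_term (s : int) (w : R) :=
  mulr_ge0 (sqr_ge0 w) (spread_gap_ge0 s spreadA ok eb ec ed').
have strict_term j s w : (j < m)%N -> j%:Z = i%:Z - s -> 0 < w ->
    0 < w ^+ 2 * gap A (a - s) (b - s) (c - s) (d - s).
  move=> ltj ej w_gt0; rewrite mulr_gt0 ?exprn_gt0 // subr_gt0.
  by apply: strictA ltj _ _ _ _ _ _ _ _; lia.
have := gap_term 0 w0; have := gap_term 1 w1; have := gap_term 2 w2; rewrite !subr0.
case/or3P: (inherit i lti) => /andP[lt_im w_gt0].
- by have := strict_term i 0 w0 lt_im ltac:(lia) w_gt0; rewrite !subr0; lra.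
- by have := strict_term i.-1 1 w1 ltac:(lia) ltac:(lia) w_gt0; lra.
- by have := strict_term i.-2 2 w2 ltac:(lia) ltac:(lia) w_gt0; lra.
Qed.

End SpreadSequences.

Section CoefSpread.
Variable R : realFieldType.
Implicit Types p h : {poly R}.

(* Indexing by [int] lets index shifts go below [0] without case analysis. *)
Definition zcoef p (i : int) : R := if i is Posz n then p`_n else 0.

Lemma zcoef_neg p i : i < 0 -> zcoef p i = 0.
Proof. by case: i. Qed.

Lemma zcoef_ge0 p : (forall n, 0 <= p`_n) -> forall i, 0 <= zcoef p i.
Proof. by move=> p_ge0 [n|n] /=. Qed.

Lemma zcoef1 i : zcoef 1 i = (i == 0)%:R.
Proof. by case: i => [n|n] //=; rewrite coef1. Qed.

Definition quadp (w0 w1 w2 : R) : {poly R} := w0%:P + w1%:P * 'X + w2%:P * 'X^2.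

Lemma zcoef_mul_quadp p w0 w1 w2 :
  zcoef (p * quadp w0 w1 w2) =1 conv3 w0 w1 w2 (zcoef p).
Proof.
case=> [n|n]; last by rewrite /conv3 !zcoef_neg ?mulr0 ?addr0 //; lia.
rewrite /quadp /conv3 /= !mulrDr !coefD !mulrA !coefMX !coefMC.
case: n => [|[|n]] /=; rewrite ?(zcoef_neg p (_ : _ - _ < 0)) //; try lra.
by rewrite add0n !subSS !subn0; lra.
Qed.

Lemma coef_mulXsubC_zcoef h r (n : nat) :
  (('X - r%:P) * h)`_n = zcoef h (n%:Z - 1) - r * zcoef h n.
Proof.
rewrite mulrBl coefB coefXM coefCM.
case: n => [|n]; first by rewrite zcoef_neg //= subr0.
by have -> : n.+1%:Z - 1 = n by lia.
Qed.

Definition nonneg_spread h := (forall n, 0 <= h`_n) /\ spread_ineq (zcoef h).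

Lemma nonneg_spread1 : nonneg_spread 1.
Proof.
split=> [n|]; first by rewrite coef1 ler0n.
move=> k t ok a b c d eb ec ed; rewrite !zcoef1.
case: t ok ec ed => [|t] ok ec ed.
  by have [-> ->] : c = a /\ d = b by split; lia.
have [c0|cn0] := eqVneq c 0; last by rewrite mul0r mulr_ge0 ?ler0n.
have /negPf -> : d != 0 by apply/eqP; lia.
by rewrite mulr0 mulr_ge0 ?ler0n.
Qed.

Lemma nonneg_spread_mul_quadp h w0 w1 w2 : nonneg_spread h ->
  0 <= w0 -> 0 <= w1 -> 0 <= w2 -> nonneg_spread (h * quadp w0 w1 w2).
Proof.
move=> [h_ge0 spreadh] w0_ge0 w1_ge0 w2_ge0; split.
  move=> n; rewrite -[_`_n]/(zcoef _ n) zcoef_mul_quadp.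
  by rewrite !addr_ge0 // mulr_ge0 // zcoef_ge0.
apply: eq_spread_ineq (fun x => esym (zcoef_mul_quadp h w0 w1 w2 x)) _.
exact: spread_ineq_conv3.
Qed.

Lemma strict_spread_linear c : 0 < c -> strict_spread (zcoef (quadp c 1 0)) 1.
Proof.
move=> c_gt0 [|//] _ a b c' d -> -> -> ->.
rewrite -[quadp _ _ _]mul1r !zcoef_mul_quadp /conv3 !zcoef1 /=; lra.
Qed.

Lemma strict_spread_quadratic (q p : R) : 0 < q -> 0 < p ->
  strict_spread (zcoef (quadp q p 1)) 2.
Proof.
move=> q_gt0 p_gt0 [|[|//]] _ a b c d -> -> -> ->;
  rewrite -[quadp _ _ _]mul1r !zcoef_mul_quadp /conv3 !zcoef1 /=; nra.
Qed.

Lemma strict_spread_mul_linear h m c : nonneg_spread h ->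
  strict_spread (zcoef h) m -> (0 < m)%N -> 0 < c ->
  strict_spread (zcoef (h * quadp c 1 0)) m.+1.
Proof.
move=> [_ spreadh] stricth m_gt0 c_gt0.
apply: eq_strict_spread (fun x => esym (zcoef_mul_quadp h c 1 0 x)) _.
apply: (strict_spread_conv3 spreadh stricth) => //; try lra.
by move=> i lti; rewrite c_gt0 ltr01 !andbT; apply/orP; lia.
Qed.

Lemma strict_spread_mul_quadratic h m (q p : R) : nonneg_spread h ->
  strict_spread (zcoef h) m -> 0 < q -> 0 <= p ->
  (1 < m)%N \/ (0 < m)%N /\ 0 < p ->
  strict_spread (zcoef (h * quadp q p 1)) m.+2.
Proof.
move=> [_ spreadh] stricth q_gt0 p_ge0 large.
apply: eq_strict_spread (fun x => esym (zcoef_mul_quadp h q p 1 x)) _.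
apply: (strict_spread_conv3 spreadh stricth) => //; try lra.
move=> i lti; rewrite q_gt0 ltr01 !andbT.
case: large => [m_gt1|[m_gt0 ->]]; rewrite ?andbT; lia.
Qed.

Lemma coef_mulXsubC_lt0 h r m (i : nat) :
  (forall n, 0 <= h`_n) -> strict_spread (zcoef h) m -> (i.+1 < m)%N ->
  (('X - r%:P) * h)`_i.+2 <= 0 -> (('X - r%:P) * h)`_i < 0.
Proof.
move=> h_ge0 stricth lti; rewrite !coef_mulXsubC_zcoef.
have S1 := stricth i (ltnW lti) i (i%:Z + 1) (i%:Z - 1) (i%:Z + 2)
  erefl erefl erefl erefl.
have S2 := stricth i.+1 lti (i%:Z + 1) (i%:Z + 2) i (i%:Z + 3)
  ltac:(lia) ltac:(lia) ltac:(lia) ltac:(lia).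
have -> : i.+2%:Z - 1 = i%:Z + 1 by lia.
have -> : i.+2%:Z = i%:Z + 2 by lia.
have := zcoef_ge0 h_ge0 i; have := zcoef_ge0 h_ge0 (i%:Z + 1).
have := zcoef_ge0 h_ge0 (i%:Z + 2); have := zcoef_ge0 h_ge0 (i%:Z + 3).
nra.
Qed.

End CoefSpread.

Section RealFactors.
Variable R : rcfType.
Local Notation liftC := (map_poly (real_complex R)).
Implicit Types (h g : {poly R}) (s : seq R[i]) (z : R[i]).

Definition lin_factor z : {poly R} := quadp (- complex.Re z) 1 0.

Definition quad_factor z : {poly R} :=
  quadp (complex.Re z ^+ 2 + complex.Im z ^+ 2) (- (2 * complex.Re z)) 1.

Lemma liftC_quadp (w0 w1 w2 : R) : liftC (quadp w0 w1 w2) =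
  (w0%:C)%C%:P + (w1%:C)%C%:P * 'X + (w2%:C)%C%:P * 'X^2.
Proof. by rewrite /quadp !rmorphD !rmorphM /= !map_polyC !map_polyX -expr2. Qed.

Lemma liftC_lin_factor z : complex.Im z = 0 -> liftC (lin_factor z) = 'X - z%:P.
Proof.
case: z => a b /= ->; rewrite liftC_quadp -[(a +i* 0)%C]/((a%:C)%C).
rewrite (rmorphN (real_complex R)) (rmorph1 (real_complex R)) (rmorph0 (real_complex R)).
by rewrite polyCN polyC1 polyC0 mul1r mul0r addr0 addrC.
Qed.

Lemma liftC_quad_factor z : liftC (quad_factor z) = ('X - z%:P) * ('X - (z^*)%C%:P).
Proof.
rewrite liftC_quadp.
have -> : ((complex.Re z ^+ 2 + complex.Im z ^+ 2)%:C)%C = z * (z^*)%C.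
  by case: z => a b; apply/eqP; rewrite eq_complex /=; apply/andP; split; apply/eqP; ring.
have -> : ((- (2 * complex.Re z))%:C)%C = - (z + (z^*)%C).
  by case: z => a b; apply/eqP; rewrite eq_complex /=; apply/andP; split; apply/eqP; ring.
rewrite (rmorph1 (real_complex R)) polyC1 mul1r polyCM polyCN polyCD; ring.
Qed.

Lemma liftC_inj : injective liftC.
Proof. exact: map_poly_inj. Qed.

Lemma liftC_eq1 h : liftC h = 1 -> h = 1.
Proof. by move=> E; apply: liftC_inj; rewrite E rmorph1. Qed.

Lemma liftC_dvd h g (P : {poly R[i]}) : liftC g != 0 -> liftC h = P * liftC g ->
  exists2 h', h = h' * g & liftC h' = P.
Proof.
move=> g_neq0 E; have E' : liftC (h %/ g) = P by rewrite map_divp E mulpK.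
by exists (h %/ g) => //; apply: liftC_inj; rewrite rmorphM /= E' E.
Qed.

Lemma root_liftC_conj h z : root (liftC h) z -> root (liftC h) (z^*)%C.
Proof.
rewrite -complex_root_conj; suff -> : map_poly conjc (liftC h) = liftC h by [].
by rewrite -map_poly_comp; apply: eq_map_poly => y /=; exact: conjc_real.
Qed.

Lemma liftC_divide_real z s h : complex.Im z = 0 ->
  liftC h = \prod_(y <- z :: s) ('X - y%:P) ->
  exists2 h', h = h' * lin_factor z & liftC h' = \prod_(y <- s) ('X - y%:P).
Proof.
move=> z_real E; apply: liftC_dvd; rewrite liftC_lin_factor //.
  by rewrite polyXsubC_eq0.
by rewrite E big_cons mulrC.
Qed.

Lemma liftC_divide_conj z s h : complex.Im z != 0 ->
  liftC h = \prod_(y <- z :: s) ('X - y%:P) ->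
  (z^*)%C \in s /\
  exists2 h', h = h' * quad_factor z &
    liftC h' = \prod_(y <- rem (z^*)%C s) ('X - y%:P).
Proof.
move=> z_nreal E.
have zJ_neq : (z^*)%C != z.
  by apply: contraNneq z_nreal; case: z {E} => a b [] Eb; apply/eqP => /=; lra.
have zJs : (z^*)%C \in s.
  have : (z^*)%C \in z :: s.
    by rewrite -root_prod_XsubC -E root_liftC_conj // E root_prod_XsubC mem_head.
  by rewrite inE (negPf zJ_neq).
split=> //; apply: liftC_dvd; rewrite liftC_quad_factor.
  by rewrite mulf_neq0 // polyXsubC_eq0.
by rewrite E big_cons (perm_big _ (perm_to_rem zJs)) big_cons /=; ring.
Qed.

Lemma Re2_Im2_gt0 z : complex.Im z != 0 -> 0 < complex.Re z ^+ 2 + complex.Im z ^+ 2.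
Proof. by move=> z_nreal; rewrite ltr_pwDr ?sqr_ge0 // exprn_even_gt0. Qed.

Lemma nonneg_spread_of_roots s h : liftC h = \prod_(y <- s) ('X - y%:P) ->
  all (fun y => complex.Re y <= 0) s -> nonneg_spread h.
Proof.
have [N lt_sN] := ubnP (size s); elim: N => // N IH in s h lt_sN *.
case: s lt_sN => [_ E _|z s /= lt_sN E /andP[z_le0 s_le0]].
  by rewrite big_nil in E; rewrite (liftC_eq1 E); exact: nonneg_spread1.
have [z_real|z_nreal] := eqVneq (complex.Im z) 0.
  have [h' -> E'] := liftC_divide_real z_real E.
  by apply: nonneg_spread_mul_quadp; [exact: IH E' s_le0 | lra | lra | lra].
have [zJs [h' -> E']] := liftC_divide_conj z_nreal E.
apply: nonneg_spread_mul_quadp; [| by rewrite addr_ge0 ?sqr_ge0 | lra | lra].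
apply: IH E' _; first by rewrite size_rem //; case: (s) zJs lt_sN => //= *; lia.
by apply/allP => y /mem_rem; apply: (allP s_le0).
Qed.

Lemma strict_spread_of_roots s h : liftC h = \prod_(y <- s) ('X - y%:P) ->
  all (fun y => complex.Re y < 0) s -> s != [::] ->
  strict_spread (zcoef h) (size s).
Proof.
have [N lt_sN] := ubnP (size s); elim: N => // N IH in s h lt_sN *.
case: s lt_sN => [//|z s] /= lt_sN E /andP[z_lt0 s_lt0] _.
have nonneg_of t h' : liftC h' = \prod_(y <- t) ('X - y%:P) ->
    all (fun y => complex.Re y < 0) t -> nonneg_spread h'.
  by move=> E' t_lt0; apply: nonneg_spread_of_roots E' (sub_all _ t_lt0) => y /ltW.
have [z_real|z_nreal] := eqVneq (complex.Im z) 0.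
  have [h' -> E'] := liftC_divide_real z_real E.
  have [s0|s_neq0] := eqVneq s [::].
    rewrite s0 big_nil in E'; rewrite s0 (liftC_eq1 E') mul1r.
    by apply: strict_spread_linear; lra.
  apply: strict_spread_mul_linear; [exact: nonneg_of E' s_lt0 | | | lra].
    by apply: IH E' s_lt0 s_neq0; lia.
  by case: (s) s_neq0.
have [zJs [h' -> E']] := liftC_divide_conj z_nreal E.
have s'_lt0 : all (fun y => complex.Re y < 0) (rem (z^*)%C s).
  by apply/allP => y /mem_rem; apply: (allP s_lt0).
have -> : size s = (size (rem (z^*)%C s)).+1 by rewrite size_rem //; case: (s) zJs.
have [s'0|s'_neq0] := eqVneq (rem (z^*)%C s) [::].
  rewrite s'0 big_nil in E'; rewrite s'0 (liftC_eq1 E') mul1r.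
  by apply: strict_spread_quadratic; [exact: Re2_Im2_gt0 | lra].
apply: strict_spread_mul_quadratic; [exact: nonneg_of E' s'_lt0 | | | lra |].
- apply: IH E' s'_lt0 s'_neq0.
  by rewrite size_rem //; case: (s) zJs lt_sN => //= *; lia.
- exact: Re2_Im2_gt0.
- by right; split; [case: (rem _ _) s'_neq0 | lra].
Qed.

Lemma excluded_form_lin_factor y : complex.Re y < 0 ->
  excluded_form (liftC (lin_factor y)).
Proof.
move=> y_lt0; exists (- complex.Re y), 0%N, (fun _ => 1); split; first by lra.
split=> [[]//|]; congr liftC.
by rewrite big_ord0 mulr1 /lin_factor /quadp polyC1 mul1r polyC0 mul0r addr0 addrC.
Qed.

Lemma excluded_form_mul_quadp h q : 0 < q -> excluded_form (liftC h) ->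
  excluded_form (liftC (h * quadp q 0 1)).
Proof.
move=> q_gt0 [mu [m [beta [mu_gt0 [beta_gt0 /liftC_inj ->]]]]].
exists mu, m.+1,
  (fun j : 'I_m.+1 => if unlift ord_max j is Some j' then beta j' else Num.sqrt q).
split=> //; split.
  by move=> j; case: unliftP => [j' _|_]; [exact: beta_gt0 | rewrite sqrtr_gt0].
congr liftC; rewrite big_ord_recr /= unlift_none -mulrA; congr (_ * (_ * _)).
  apply: eq_bigr => j _.
  have -> : widen_ord (leqnSn m) j = lift ord_max j by apply: ord_inj; rewrite lift_max.
  by rewrite liftK.
by rewrite sqr_sqrtr ?(ltW q_gt0) // /quadp polyC0 mul0r addr0 polyC1 mul1r addrC.
Qed.

(* A lone root with negative real part is real, making [h = X + mu]. *)
Lemma size_roots_gt1 s h : liftC h = \prod_(y <- s) ('X - y%:P) ->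
  has (fun y => complex.Re y < 0) s -> ~ excluded_form (liftC h) -> (1 < size s)%N.
Proof.
case: s => [//|y [|//]] E /= /orP[y_lt0 //|//] not_excl.
have [y_real|y_nreal] := eqVneq (complex.Im y) 0; last first.
  by have [] := liftC_divide_conj y_nreal E.
have [h' Eh E'] := liftC_divide_real y_real E.
rewrite big_nil in E'; rewrite Eh (liftC_eq1 E') mul1r in not_excl.
by case: not_excl; exact: excluded_form_lin_factor.
Qed.

Lemma strict_spread_of_roots_nonexcluded s h :
  liftC h = \prod_(y <- s) ('X - y%:P) ->
  all (fun y => (complex.Re y <= 0) && (y != 0)) s ->
  has (fun y => complex.Re y < 0) s -> ~ excluded_form (liftC h) ->
  strict_spread (zcoef h) (size s).
Proof.
have [N lt_sN] := ubnP (size s); elim: N => // N IH in s h lt_sN *.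
move=> E s_ok s_neg not_excl.
have [/hasP[z zs /eqP z_imag]|no_imag] :=
  boolP (has (fun y => complex.Re y == 0) s); last first.
  apply: strict_spread_of_roots E _ _; last by case: (s) s_neg.
  apply/allP => y ys; have /andP[y_le0 _] := allP s_ok y ys.
  by rewrite lt_neqAle y_le0 (hasPn no_imag).
have z_nreal : complex.Im z != 0.
  have /andP[_] := allP s_ok z zs; apply: contraNneq.
  by case: (z) z_imag => a b /= -> ->.
rewrite (perm_big _ (perm_to_rem zs)) in E.
have [zJs [h' Eh E']] := liftC_divide_conj z_nreal E.
set s' := rem _ (rem z s) in E'.
have s'_sub : {subset s' <= s} by move=> y /mem_rem /mem_rem.
have s'_neg : has (fun y => complex.Re y < 0) s'.
  case/hasP: s_neg => y ys y_lt0; apply/hasP; exists y => //.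
  have Re_neq y' : complex.Re y' = 0 -> y != y'.
    by move=> Re0; apply: contraTneq y_lt0 => ->; rewrite Re0 ltxx.
  by rewrite !(rem_mem (Re_neq _ _)) //; case: (z) z_imag.
have quad_imag : quad_factor z = quadp (complex.Im z ^+ 2) 0 1.
  by rewrite /quad_factor z_imag expr0n add0r mulr0 oppr0.
have not_excl' : ~ excluded_form (liftC h').
  move=> excl'; apply: not_excl; rewrite Eh quad_imag.
  by apply: excluded_form_mul_quadp excl'; rewrite exprn_even_gt0.
have size_s : size s = (size s').+2.
  rewrite /s' (size_rem zJs); have := size_rem zs.
  by case: (rem z s) zJs => //= y t _; lia.
rewrite size_s Eh quad_imag; apply: strict_spread_mul_quadratic.
- apply: nonneg_spread_of_roots E' _; apply/allP => y /s'_sub ys.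
  by have /andP[] := allP s_ok y ys.
- apply: IH E' _ s'_neg not_excl'; last by apply/allP => y /s'_sub; apply: (allP s_ok).
  by move: lt_sN; rewrite size_s ltnS => /ltnW.
- by rewrite exprn_even_gt0.
- by [].
- by left; exact: size_roots_gt1 E' s'_neg not_excl'.
Qed.

Lemma liftC_divide_XsubC f (r : R) s :
  liftC f = ('X - (r%:C)%C%:P) * \prod_(y <- s) ('X - y%:P) ->
  exists2 h, f = ('X - r%:P) * h & liftC h = \prod_(y <- s) ('X - y%:P).
Proof.
move=> E.
have liftX : liftC ('X - r%:P) = 'X - (r%:C)%C%:P.
  by rewrite rmorphB /= map_polyX map_polyC.
have [h Ef Eh] :
    exists2 h, f = h * ('X - r%:P) & liftC h = \prod_(y <- s) ('X - y%:P).
  by apply: liftC_dvd; rewrite liftX ?polyXsubC_eq0 // E mulrC.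
by exists h; rewrite // Ef mulrC.
Qed.

End RealFactors.

(* x j (j : 'I_n.-1) stands for the paper's x_{j+2};  a_k = f`_(n - k). *)
Theorem theorem4p5 (R : rcfType) (n : nat) (f : {poly R}) (r : R)
    (x : 'I_n.-1 -> R[i]) :
    (1 <= n)%N ->
    0 < r ->
    (forall j, x j != 0) ->
    (forall j, complex.Re (x j) <= 0) ->
    (exists j, complex.Re (x j) < 0) ->
    map_poly (real_complex R) f =
      ('X - (r%:C)%C%:P) * \prod_(j < n.-1) ('X - (x j)%:P) ->
    ~ excluded_form (\prod_(j < n.-1) ('X - (x j)%:P)) ->
    forall k : nat, (1 <= k <= n - 2)%N ->
      f`_(n - k) <= 0 -> f`_(n - (k + 2)) < 0.
Proof.
move=> _ _ x_neq0 x_le0 [j0 xj0_lt0] Ef not_excl k /andP[k_ge1 k_le].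
set s := map x (enum 'I_n.-1).
have Es : \prod_(j < n.-1) ('X - (x j)%:P) = \prod_(y <- s) ('X - y%:P).
  by rewrite big_map big_enum.
rewrite Es in Ef not_excl; have [h -> Eh] := liftC_divide_XsubC Ef.
rewrite -Eh in not_excl.
have s_ok : all (fun y => (complex.Re y <= 0) && (y != 0)) s.
  by apply/allP => y /mapP[j _ ->]; rewrite x_le0 x_neq0.
have s_neg : has (fun y => complex.Re y < 0) s.
  by apply/hasP; exists (x j0); rewrite ?map_f ?mem_enum.
have [h_ge0 _] : nonneg_spread h.
  by apply: nonneg_spread_of_roots Eh _; apply/allP => y /mapP[j _ ->].
have := strict_spread_of_roots_nonexcluded Eh s_ok s_neg not_excl.
rewrite size_map size_enum_ord => strict_h.
have -> : (n - k = (n - (k + 2)).+2)%N by lia.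
by apply: coef_mulXsubC_lt0 h_ge0 strict_h _; lia.
Qed.
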